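(* Let $T:\mathbb N\to\mathbb N$ satisfy $T(n)\ge n$ for all $n$. For a well-typed program $p$ and input $\tilde v$ write $n=\mathrm{sz}(\tilde v)$. The following three statements are equivalent: (1) every well-typed CorePolyC program $p$ satisfies $\mathrm{ic}(p,\tilde v)=O(T(n))$; (2) every well-typed CorePolyC program $p$ satisfies $\mathrm{sz}([\![p]\!](\tilde v))=O(T(n))$; (3) every well-typed CorePolyC program $p$ satisfies $\mathrm{sz}(\mathscr E_{p,\tilde v})=O(T(n))$. (Here the constants in $O(\cdot)$ may depend on $p$ but not on $\tilde v$.)
   Context: CorePolyC. Types are $\mathtt{iint},\mathtt{int},\mathtt{bool}$; $\mathsf{Int}=\{\mathtt{iint},\mathtt{int}\}$, ordered by $\mathtt{iint}\preccurlyeq\mathtt{int}$. Values are unbounded integers ($\mathbb Z$) and booleans $\#t,\#f$. Expressions: variables $x$; constants (nonempty decimal digit strings denoting natural numbers; $\mathtt{true}$, $\mathtt{false}$); operator applications $\mathtt{op}(e_1,\dots,e_m)$; parenthesized $(e)$. Operators and semantics: unary $-$ (negation); binary $+,-,/,\%$ (integer addition, subtraction, division, remainder, with division and remainder by $0$ returning $0$); $\mathtt{size}$, with $\mathtt{size}(v)=\lceil\log_2(\mathrm{abs}(v)+1)\rceil$; comparisons $\texttt{>=},\texttt{<=},\texttt{>},\texttt{<},\texttt{==},\texttt{!=}$ on integers returning booleans; boolean $\texttt{!},\texttt{\&\&},\texttt{||}$. Statements: declaration $t\ x;$; assignment $x=e;$; block $\{s_1\dots s_m\}$; conditional $\mathbf{if}(e)\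 s_1\ \mathbf{else}\ s_2$; loop $\mathbf{for}(x<\mathtt{size}(e))\ s$ (loop bounds are always syntactically of the form $\mathtt{size}(e)$). A program is $\mathbf{int\ main}(\mathbf{int}\ x_1,\dots,\mathbf{int}\ x_m)\{s_1\dots s_k\ \mathbf{return}\ e;\}$. Semantics (big-step). A store $\Sigma$ is a finite partial map from variables to values; $\Sigma[x\mapsto v]$ is the update. $\Sigma\vdash e\Downarrow v$: a variable $x\in\mathrm{dom}\,\Sigma$ evaluates to $\Sigma(x)$, constants to their value, $\mathtt{op}(e_1,\dots,e_m)$ to $\mathtt{op}$ applied to the values of the $e_i$. $\Sigma\vdash s\Downarrow\Sigma'$: $t\ x;$ gives $\Sigma[x\mapsto 0]$ if $t\in\mathsf{Int}$ and $\Sigma[x\mapsto\#f]$ if $t=\mathtt{bool}$; $x=e;$ (with $x\in\mathrm{dom}\,\Sigma$) gives $\Sigma[x\mapsto v]$ where $\Sigma\vdash e\Downarrow v$; a sequence or block executes its statements in order threading the store (a block returns the final store); a conditional evaluates its guard to a boolean and executes the corresponding branch; $\mathbf{for}(x<e)\ s$ evaluates $e$ once to an integer $i$, sets $\Sigma_0=\Sigma$, executes $s$ from $\Sigma_j[x\mapsto j]$ obtaining $\Sigma_{j+1}$ for $j=0,\dots,i-1$, and ends in $\Sigma_i$ (i.e. in $\Sigma$ if $i\le 0$). A program on inputs $v_1,\dots,v_m$ runs its statements from the store $[x_1\mapsto v_1,\dots,x_m\mapsto v_m]$ and outputs the value of its return expression in the resulting store. Type system. A typing environment $\Gamma$ is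 a finite partial map from variables to types; $\ell\in\{\#t,\#f\}$ is the loop indicator. Expression typing $\Gamma,\ell\vdash e:t$: a variable $x\in\mathrm{dom}\,\Gamma$ has type $\Gamma(x)$; digit literals have type $\mathtt{iint}$, $\mathtt{true},\mathtt{false}$ have type $\mathtt{bool}$; $\texttt{!},\texttt{\&\&},\texttt{||}$ take $\mathtt{bool}$ arguments to $\mathtt{bool}$; comparisons take arguments with types in $\mathsf{Int}$ to $\mathtt{bool}$; $+,-,/,\%$ take arguments with types in $\mathsf{Int}$ to their supremum under $\preccurlyeq$ ($\mathtt{iint}$ iff all arguments are $\mathtt{iint}$); $\mathtt{size}$ takes only an $\mathtt{iint}$ argument, giving $\mathtt{iint}$; parentheses preserve types. Statement typing $\Gamma,\ell\vdash s:\Gamma'$: $t\ x;$ is typable iff $x\notin\mathrm{dom}\,\Gamma$ and not($\ell=\#t$ and $t=\mathtt{iint}$), giving $\Gamma[x\mapsto t]$; $x=e;$ is typable iff $x\in\mathrm{dom}\,\Gamma$, not($\ell=\#t$ and $\Gamma(x)=\mathtt{iint}$), and $\Gamma,\ell\vdash e:t$ with $t,\Gamma(x)$ both in $\mathsf{Int}$ or both $\mathtt{bool}$, giving $\Gamma$; a sequence $s_1\dots s_m$ threads $\Gamma_0=\Gamma$, $\Gamma_{i-1},\ell\vdash s_i:\Gamma_i$, giving $\Gamma_m$; a block $\{\tilde s\}$ is typable if its sequence is, giving $\Gamma$; a conditional needs a guard of type $\mathtt{bool}$ and both branches typable under $\Gamma,\ell$, giving $\Gamma$; $\mathbf{for}(x<e)\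 s$ needs $\Gamma,\ell\vdash e:\mathtt{iint}$, $x\notin\mathrm{dom}\,\Gamma$, and $\Gamma[x\mapsto\mathtt{iint}],\#t\vdash s:\Gamma'$ for some $\Gamma'$, giving $\Gamma$. A program is well-typed if its statements are typable starting from $[x_1\mapsto\mathtt{int},\dots,x_m\mapsto\mathtt{int}]$ with $\ell=\#f$, ending in some $\Gamma'$, and its return expression has a type in $\mathsf{Int}$ under $\Gamma',\#f$. A well-typed program $p$ with $m$ inputs computes a total function $[\![p]\!]:\mathbb Z^m\to\mathbb Z$. Sizes: $\mathrm{sz}(v)=\lceil\log_2(\mathrm{abs}(v)+1)\rceil$ for $v\in\mathbb Z$, $\mathrm{sz}(\#t)=\mathrm{sz}(\#f)=1$, $\mathrm{sz}(v_1,\dots,v_m)=\sum_i\mathrm{sz}(v_i)$, and $\mathrm{sz}(\Sigma)=\max_{x\in\mathrm{dom}\,\Sigma}\mathrm{sz}(\Sigma(x))$ ($0$ if empty). $\mathscr E_{p,\tilde v}$ is the (unique) semantic derivation tree of the run of $p$ on input $\tilde v$, and $\mathrm{sz}(\mathscr E_{p,\tilde v})$ is the maximum of $\mathrm{sz}(\Sigma')$ over all stores $\Sigma'$ occurring in it (the largest intermediate value). Instruction count (cost semantics) $\mathrm{ic}$: a variable or constant costs $1$; a parenthesized expression costs $1$ plus its content; $\mathtt{op}(e_1,\dots,e_m)$ costs $1$ plus the costs of the $e_i$; a declaration costs $1$; an assignment costs $1$ plus the cost of its expression; a block costs $1$ plus the cost of its sequence; a sequence costs the sum of its statements' costs; a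 conditional costs the guard's cost plus the cost of the executed branch; a loop costs the cost of evaluating its bound plus the sum of the costs of all executed iterations of its body; a program costs its statements' cost plus the cost of its return expression. $\mathrm{ic}(p,\tilde v)$ is the cost of running $p$ on $\tilde v$. *)

From Stdlib Require Import ZArith List Arith Lia.
Import ListNotations.
Open Scope Z_scope.

Definition var := nat.

Inductive ty := TIint | TInt | TBool.
Inductive val := VInt (z : Z) | VBool (b : bool).

Inductive unop := UNeg | USize | UNot.
Inductive binop := BAdd | BSub | BDiv | BMod
  | BGe | BLe | BGt | BLt | BEq | BNe | BAnd | BOr.

Inductive expr :=
| EVar (x : var)
| ENum (n : nat)
| ETrue | EFalse
| EUn (o : unop) (e : expr)
| EBin (o : binop) (e1 e2 : expr)
| EParen (e : expr).

Inductive stmt :=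
| SDecl (t : ty) (x : var)
| SAssign (x : var) (e : expr)
| SBlock (ss : list stmt)
| SIf (e : expr) (s1 s2 : stmt)
| SFor (x : var) (e : expr) (s : stmt).   (* for (x < size(e)) s *)

Record program := Program {
  params : list var;
  body : list stmt;
  ret : expr }.

Definition zsize (v : Z) : Z := Z.log2_up (Z.abs v + 1).
Definition sz_z (v : Z) : nat := Z.to_nat (zsize v).
Definition sz_val (v : val) : nat :=
  match v with VInt z => sz_z z | VBool _ => 1%nat end.
Definition sz_inputs (vs : list Z) : nat := fold_right (fun v acc => (sz_z v + acc)%nat) 0%nat vs.

(* ---------- stores: finite partial maps as duplicate-free association lists ---------- *)
Definition store := list (var * val).
Fixpoint lookup (S : store) (x : var) : option val :=
  match S with
  | [] => None
  | (y, v) :: S' => if Nat.eqb x y then Some v else lookup S' x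
  end.
Definition upd (S : store) (x : var) (v : val) : store :=
  (x, v) :: filter (fun p => negb (Nat.eqb (fst p) x)) S.
Definition sz_store (S : store) : nat :=
  fold_right (fun p acc => Nat.max (sz_val (snd p)) acc) 0%nat S.

Definition eval_unop (o : unop) (v : val) : option val :=
  match o, v with
  | UNeg, VInt z => Some (VInt (- z))
  | USize, VInt z => Some (VInt (zsize z))
  | UNot, VBool b => Some (VBool (negb b))
  | _, _ => None
  end.

Definition eval_binop (o : binop) (v1 v2 : val) : option val :=
  match o, v1, v2 with
  | BAdd, VInt a, VInt b => Some (VInt (a + b))
  | BSub, VInt a, VInt b => Some (VInt (a - b))
  | BDiv, VInt a, VInt b => Some (VInt (if b =? 0 then 0 else Z.quot a b))
  | BMod, VInt a, VInt b => Some (VInt (if b =? 0 then 0 else Z.rem a b))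
  | BGe, VInt a, VInt b => Some (VBool (b <=? a))
  | BLe, VInt a, VInt b => Some (VBool (a <=? b))
  | BGt, VInt a, VInt b => Some (VBool (b <? a))
  | BLt, VInt a, VInt b => Some (VBool (a <? b))
  | BEq, VInt a, VInt b => Some (VBool (a =? b))
  | BNe, VInt a, VInt b => Some (VBool (negb (a =? b)))
  | BAnd, VBool a, VBool b => Some (VBool (a && b))
  | BOr, VBool a, VBool b => Some (VBool (a || b))
  | _, _, _ => None
  end.

Inductive eval : store -> expr -> val -> Prop :=
| ev_var S x v : lookup S x = Some v -> eval S (EVar x) v
| ev_num S n : eval S (ENum n) (VInt (Z.of_nat n))
| ev_true S : eval S ETrue (VBool true)
| ev_false S : eval S EFalse (VBool false)
| ev_un S o e v w : eval S e v -> eval_unop o v = Some w -> eval S (EUn o e) w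
| ev_bin S o e1 e2 v1 v2 w : eval S e1 v1 -> eval S e2 v2 ->
    eval_binop o v1 v2 = Some w -> eval S (EBin o e1 e2) w
| ev_paren S e v : eval S e v -> eval S (EParen e) v.

Fixpoint ic_expr (e : expr) : nat :=
  match e with
  | EVar _ | ENum _ | ETrue | EFalse => 1
  | EUn _ e => 1 + ic_expr e
  | EBin _ e1 e2 => 1 + ic_expr e1 + ic_expr e2
  | EParen e => 1 + ic_expr e
  end.

Definition default_val (t : ty) : val :=
  match t with TBool => VBool false | _ => VInt 0 end.

(* ---------- big-step statement semantics ----------
   exec S s S' c m : S |- s ⇓ S', the run costs c instructions, and m is the
   maximum of sz over all stores occurring in the derivation tree. *)
Inductive exec : store -> stmt -> store -> nat -> nat -> Prop :=
| ex_decl S t x :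
    exec S (SDecl t x) (upd S x (default_val t)) 1
         (Nat.max (sz_store S) (sz_store (upd S x (default_val t))))
| ex_assign S x e v :
    lookup S x <> None -> eval S e v ->
    exec S (SAssign x e) (upd S x v) (1 + ic_expr e)
         (Nat.max (sz_store S) (sz_store (upd S x v)))
| ex_block S ss S' c m :
    exec_seq S ss S' c m -> exec S (SBlock ss) S' (1 + c) m
| ex_if S e b s1 s2 S' c m :
    eval S e (VBool b) -> exec S (if b then s1 else s2) S' c m ->
    exec S (SIf e s1 s2) S' (ic_expr e + c) (Nat.max (sz_store S) m)
| ex_for S x e s z S' c m :
    eval S (EUn USize e) (VInt z) ->
    exec_loop S x s 0 (Z.to_nat z) S' c m ->
    exec S (SFor x e s) S' (ic_expr (EUn USize e) + c) (Nat.max (sz_store S) m)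
with exec_seq : store -> list stmt -> store -> nat -> nat -> Prop :=
| exs_nil S : exec_seq S [] S 0 (sz_store S)
| exs_cons S s ss S1 S2 c1 c2 m1 m2 :
    exec S s S1 c1 m1 -> exec_seq S1 ss S2 c2 m2 ->
    exec_seq S (s :: ss) S2 (c1 + c2) (Nat.max m1 m2)
(* exec_loop S_j x s j i S_i c m : iterations j, ..., i-1 of the loop body *)
with exec_loop : store -> var -> stmt -> nat -> nat -> store -> nat -> nat -> Prop :=
| exl_done S x s j i : (i <= j)%nat -> exec_loop S x s j i S 0 (sz_store S)
| exl_step S x s j i S1 S2 c1 c2 m1 m2 : (j < i)%nat ->
    exec (upd S x (VInt (Z.of_nat j))) s S1 c1 m1 ->
    exec_loop S1 x s (Datatypes.S j) i S2 c2 m2 ->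
    exec_loop S x s j i S2 (c1 + c2) (Nat.max (sz_store S) (Nat.max m1 m2)).

Definition init_store (xs : list var) (vs : list Z) : store :=
  fold_left (fun S p => upd S (fst p) (VInt (snd p))) (combine xs vs) [].

(* run p vs out c m : on input vs, p outputs out, with ic(p,vs) = c and
   sz(E_{p,vs}) = m. *)
Inductive run (p : program) (vs : list Z) : Z -> nat -> nat -> Prop :=
| run_intro S' c m out :
    exec_seq (init_store (params p) vs) (body p) S' c m ->
    eval S' (ret p) (VInt out) ->
    run p vs out (c + ic_expr (ret p)) m.

Definition tenv := var -> option ty.
Definition tupd (G : tenv) (x : var) (t : ty) : tenv :=
  fun y => if Nat.eqb y x then Some t else G y.
Definition is_int (t : ty) : Prop := t = TIint \/ t = TInt.
Definition sup (t1 t2 : ty) : ty :=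
  match t1, t2 with TIint, TIint => TIint | _, _ => TInt end.
Definition is_arith (o : binop) : bool :=
  match o with BAdd | BSub | BDiv | BMod => true | _ => false end.
Definition is_cmp (o : binop) : bool :=
  match o with BGe | BLe | BGt | BLt | BEq | BNe => true | _ => false end.
Definition is_bool_op (o : binop) : bool :=
  match o with BAnd | BOr => true | _ => false end.

Inductive ty_expr : tenv -> bool -> expr -> ty -> Prop :=
| te_var G l x t : G x = Some t -> ty_expr G l (EVar x) t
| te_num G l n : ty_expr G l (ENum n) TIint
| te_true G l : ty_expr G l ETrue TBool
| te_false G l : ty_expr G l EFalse TBool
| te_not G l e : ty_expr G l e TBool -> ty_expr G l (EUn UNot e) TBool
| te_neg G l e t : ty_expr G l e t -> is_int t -> ty_expr G l (EUn UNeg e) t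
| te_size G l e : ty_expr G l e TIint -> ty_expr G l (EUn USize e) TIint
| te_arith G l o e1 e2 t1 t2 : is_arith o = true ->
    ty_expr G l e1 t1 -> ty_expr G l e2 t2 -> is_int t1 -> is_int t2 ->
    ty_expr G l (EBin o e1 e2) (sup t1 t2)
| te_cmp G l o e1 e2 t1 t2 : is_cmp o = true ->
    ty_expr G l e1 t1 -> ty_expr G l e2 t2 -> is_int t1 -> is_int t2 ->
    ty_expr G l (EBin o e1 e2) TBool
| te_bool G l o e1 e2 : is_bool_op o = true ->
    ty_expr G l e1 TBool -> ty_expr G l e2 TBool ->
    ty_expr G l (EBin o e1 e2) TBool
| te_paren G l e t : ty_expr G l e t -> ty_expr G l (EParen e) t.

Definition compat (t1 t2 : ty) : Prop :=
  (is_int t1 /\ is_int t2) \/ (t1 = TBool /\ t2 = TBool).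

Inductive ty_stmt : tenv -> bool -> stmt -> tenv -> Prop :=
| ts_decl G l t x : G x = None -> ~ (l = true /\ t = TIint) ->
    ty_stmt G l (SDecl t x) (tupd G x t)
| ts_assign G l x e tx t : G x = Some tx -> ~ (l = true /\ tx = TIint) ->
    ty_expr G l e t -> compat t tx -> ty_stmt G l (SAssign x e) G
| ts_block G l ss G' : ty_seq G l ss G' -> ty_stmt G l (SBlock ss) G
| ts_if G l e s1 s2 G1 G2 : ty_expr G l e TBool ->
    ty_stmt G l s1 G1 -> ty_stmt G l s2 G2 -> ty_stmt G l (SIf e s1 s2) G
| ts_for G l x e s G' : ty_expr G l (EUn USize e) TIint -> G x = None ->
    ty_stmt (tupd G x TIint) true s G' -> ty_stmt G l (SFor x e s) G
with ty_seq : tenv -> bool -> list stmt -> tenv -> Prop :=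
| tss_nil G l : ty_seq G l [] G
| tss_cons G l s ss G1 G2 : ty_stmt G l s G1 -> ty_seq G1 l ss G2 ->
    ty_seq G l (s :: ss) G2.

Definition init_tenv (xs : list var) : tenv :=
  fun y => if existsb (Nat.eqb y) xs then Some TInt else None.

Definition well_typed (p : program) : Prop :=
  exists G' t, ty_seq (init_tenv (params p)) false (body p) G' /\
    ty_expr G' false (ret p) t /\ is_int t.

Definition ic_bounded (T : nat -> nat) : Prop :=
  forall p, well_typed p -> exists c n0 : nat, forall vs out ic m,
    length vs = length (params p) -> (n0 <= sz_inputs vs)%nat ->
    run p vs out ic m -> (ic <= c * T (sz_inputs vs))%nat.

Definition out_bounded (T : nat -> nat) : Prop :=
  forall p, well_typed p -> exists c n0 : nat, forall vs out ic m,
    length vs = length (params p) -> (n0 <= sz_inputs vs)%nat ->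
    run p vs out ic m -> (sz_z out <= c * T (sz_inputs vs))%nat.

Definition deriv_bounded (T : nat -> nat) : Prop :=
  forall p, well_typed p -> exists c n0 : nat, forall vs out ic m,
    length vs = length (params p) -> (n0 <= sz_inputs vs)%nat ->
    run p vs out ic m -> (m <= c * T (sz_inputs vs))%nat.

From Stdlib Require Import ZArith List Arith Lia.
Import ListNotations.
Open Scope Z_scope.

(* (1) -> (3): every executed instruction enlarges the largest stored value by at
   most a constant [K] depending only on the program (the size of a literal, one
   bit per operator, or a loop counter, which is smaller than the iteration count
   and hence than the size of a stored value), so the derivation size is at most
   sz(input) + K * ic.
   (3) -> (2): the output is one expression evaluated in the final store.
   (2) -> (1): a run of p making k loop iterations costs O(k + 1) instructions.
   Adding to p a fresh int counter, initialised to 1, doubled at the end of every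
   loop body and returned, gives a well-typed program with output 2^k, so
   k <= sz(2^k) = O(T(n)). *)

Lemma sz_z_spec a : Z.of_nat (sz_z a) = zsize a.
Proof. unfold sz_z, zsize. rewrite Z2Nat.id; auto using Z.log2_up_nonneg. Qed.

Lemma sz_z_mono a b : Z.abs a <= Z.abs b -> (sz_z a <= sz_z b)%nat.
Proof.
  intros H. pose proof (sz_z_spec a); pose proof (sz_z_spec b). unfold zsize in *.
  pose proof (Z.log2_up_le_mono (Z.abs a + 1) (Z.abs b + 1)). lia.
Qed.

Lemma zsize_le_abs a : zsize a <= Z.abs a.
Proof.
  unfold zsize. destruct (Z.eq_dec (Z.abs a) 0) as [->|Ha]; [reflexivity|].
  rewrite Z.log2_up_eqn by lia. replace (Z.pred (Z.abs a + 1)) with (Z.abs a) by lia.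
  pose proof (Z.log2_lt_lin (Z.abs a)). lia.
Qed.

Lemma sz_z_zsize a : (sz_z (zsize a) <= sz_z a)%nat.
Proof.
  apply sz_z_mono. pose proof (zsize_le_abs a); pose proof (sz_z_spec a). lia.
Qed.

Lemma sz_z_of_nat (j : nat) : (sz_z (Z.of_nat j) <= j)%nat.
Proof. pose proof (zsize_le_abs (Z.of_nat j)); pose proof (sz_z_spec (Z.of_nat j)). lia. Qed.

Lemma sz_z_le_max_succ a b c : Z.abs c <= Z.abs a + Z.abs b ->
  (sz_z c <= Nat.max (sz_z a) (sz_z b) + 1)%nat.
Proof.
  intros Hc.
  assert (Hd : forall d, Z.abs a <= Z.abs d -> Z.abs b <= Z.abs d ->
                 (sz_z c <= sz_z d + 1)%nat).
  { intros d Ha Hb. pose proof (sz_z_spec c); pose proof (sz_z_spec d). unfold zsize in *.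
    assert (Hlog : Z.log2_up (Z.abs c + 1) <= Z.log2_up ((Z.abs d + 1) * 2 ^ 1))
      by (apply Z.log2_up_le_mono; lia).
    rewrite Z.log2_up_mul_pow2 in Hlog by lia. lia. }
  destruct (Z.le_ge_cases (Z.abs a) (Z.abs b));
    [specialize (Hd b) | specialize (Hd a)]; lia.
Qed.

Lemma sz_z_quot a b : b <> 0 -> (sz_z (Z.quot a b) <= sz_z a)%nat.
Proof.
  intros Hb. apply sz_z_mono. rewrite <- Z.quot_abs by auto.
  apply Z.quot_le_upper_bound; nia.
Qed.

Lemma sz_z_rem a b : b <> 0 -> (sz_z (Z.rem a b) <= sz_z a)%nat.
Proof.
  intros Hb. apply sz_z_mono. rewrite <- Z.rem_abs by auto. apply Z.rem_le; lia.
Qed.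

Lemma sz_z_pow2 k : (k <= sz_z (2 ^ Z.of_nat k))%nat.
Proof.
  pose proof (sz_z_spec (2 ^ Z.of_nat k)). unfold zsize in *.
  rewrite Z.abs_eq in H by (apply Z.pow_nonneg; lia).
  pose proof (Z.log2_up_le_mono (2 ^ Z.of_nat k) (2 ^ Z.of_nat k + 1)).
  rewrite Z.log2_up_pow2 in H0 by lia. lia.
Qed.

Lemma lookup_filter_neq S x y : y <> x ->
  lookup (filter (fun p => negb (Nat.eqb (fst p) x)) S) y = lookup S y.
Proof.
  intros Hyx. induction S as [|[z w] S IH]; simpl; auto.
  destruct (Nat.eqb_spec z x); simpl.
  - subst. destruct (Nat.eqb_spec y x); [lia|auto].
  - destruct (y =? z)%nat; auto.
Qed.

Lemma lookup_upd S x v y :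
  lookup (upd S x v) y = if Nat.eqb y x then Some v else lookup S y.
Proof.
  unfold upd. simpl. destruct (Nat.eqb_spec y x); auto. apply lookup_filter_neq; auto.
Qed.

Lemma sz_store_upd S x v : (sz_store (upd S x v) <= Nat.max (sz_val v) (sz_store S))%nat.
Proof.
  assert (Hf : (sz_store (filter (fun p => negb (Nat.eqb (fst p) x)) S) <= sz_store S)%nat).
  { induction S as [|[z w] S IH]; simpl; auto.
    destruct (negb (z =? x)%nat); simpl; lia. }
  unfold upd. simpl. lia.
Qed.

Lemma sz_val_lookup S x v : lookup S x = Some v -> (sz_val v <= sz_store S)%nat.
Proof.
  induction S as [|[z w] S IH]; simpl; try discriminate.
  destruct (x =? z)%nat; intros H; [inversion H; subst; simpl|specialize (IH H)]; lia.
Qed.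

Lemma sz_store_init_store xs vs : (sz_store (init_store xs vs) <= sz_inputs vs)%nat.
Proof.
  unfold init_store. change (sz_inputs vs) with (sz_store [] + sz_inputs vs)%nat.
  generalize (@nil (var * val)). revert vs.
  induction xs as [|x xs IH]; intros [|v vs] S; simpl; try lia.
  specialize (IH vs (upd S x (VInt v))). pose proof (sz_store_upd S x (VInt v)).
  simpl in *. lia.
Qed.

Lemma sz_eval_unop o v w : eval_unop o v = Some w -> (sz_val w <= sz_val v + 1)%nat.
Proof.
  destruct o, v; simpl; intros H; inversion H; subst; simpl; try lia.
  - assert (sz_z (- z) <= sz_z z)%nat by (apply sz_z_mono; rewrite Z.abs_opp; lia). lia.
  - pose proof (sz_z_zsize z). lia.
Qed.

Lemma sz_eval_binop o v1 v2 w : eval_binop o v1 v2 = Some w ->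
  (sz_val w <= Nat.max (sz_val v1) (sz_val v2) + 1)%nat.
Proof.
  destruct o, v1 as [a|p], v2 as [b|q]; simpl; intros H; inversion H; subst; simpl; try lia.
  - apply sz_z_le_max_succ. lia.
  - apply sz_z_le_max_succ. lia.
  - destruct (Z.eqb_spec b 0); [cbv; lia|]. pose proof (sz_z_quot a b). lia.
  - destruct (Z.eqb_spec b 0); [cbv; lia|]. pose proof (sz_z_rem a b). lia.
Qed.

Fixpoint expr_growth (e : expr) : nat :=
  match e with
  | EVar _ => 0
  | ENum n => sz_z (Z.of_nat n)
  | ETrue | EFalse => 1
  | EUn _ e => 1 + expr_growth e
  | EBin _ e1 e2 => 1 + Nat.max (expr_growth e1) (expr_growth e2)
  | EParen e => expr_growth e
  end.

Lemma sz_val_eval S e v : eval S e v -> (sz_val v <= sz_store S + expr_growth e)%nat.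
Proof.
  induction 1; simpl; try lia.
  - apply sz_val_lookup in H. lia.
  - apply sz_eval_unop in H0. lia.
  - apply sz_eval_binop in H1. lia.
Qed.

Lemma eval_size_to_nat_le S e z : eval S (EUn USize e) (VInt z) ->
  (Z.to_nat z <= sz_store S + expr_growth e)%nat.
Proof.
  intros He. inversion He as [| | | |? ? ? v ? Hv Hop| |]; subst.
  destruct v; inversion Hop; subst. exact (sz_val_eval _ _ _ Hv).
Qed.

Scheme exec_min_ind := Minimality for exec Sort Prop
with exec_seq_min_ind := Minimality for exec_seq Sort Prop
with exec_loop_min_ind := Minimality for exec_loop Sort Prop.
Combined Scheme exec_mutind from exec_min_ind, exec_seq_min_ind, exec_loop_min_ind.

Lemma exec_sz_store_le :
  (forall S s S' c m, exec S s S' c m -> (sz_store S <= m /\ sz_store S' <= m)%nat) /\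
  (forall S ss S' c m, exec_seq S ss S' c m -> (sz_store S <= m /\ sz_store S' <= m)%nat) /\
  (forall S x s j i S' c m, exec_loop S x s j i S' c m ->
     (sz_store S <= m /\ sz_store S' <= m)%nat).
Proof. apply exec_mutind; intros; lia. Qed.

Fixpoint stmt_growth (s : stmt) : nat :=
  match s with
  | SDecl _ _ => 0
  | SAssign _ e => expr_growth e
  | SBlock ss => list_max (map stmt_growth ss)
  | SIf _ s1 s2 => Nat.max (stmt_growth s1) (stmt_growth s2)
  | SFor _ e s => Nat.max (expr_growth e) (stmt_growth s)
  end.

Lemma exec_sz_le_growth :
  (forall S s S' c m, exec S s S' c m -> forall K, (stmt_growth s <= K)%nat -> (1 <= K)%nat ->
     (m <= sz_store S + K * c)%nat) /\
  (forall S ss S' c m, exec_seq S ss S' c m -> forall K,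
     (list_max (map stmt_growth ss) <= K)%nat -> (1 <= K)%nat ->
     (m <= sz_store S + K * c)%nat) /\
  (forall S x s j i S' c m, exec_loop S x s j i S' c m -> forall K,
     (stmt_growth s <= K)%nat -> (1 <= K)%nat ->
     (m <= Nat.max (sz_store S) i + K * c)%nat).
Proof.
  apply exec_mutind.
  - intros S t x K _ HK. pose proof (sz_store_upd S x (default_val t)).
    assert (sz_val (default_val t) <= 1)%nat by (destruct t; cbv; lia). nia.
  - intros S x e v _ He K Hg HK. simpl in Hg. pose proof (sz_store_upd S x v).
    pose proof (sz_val_eval _ _ _ He). nia.
  - intros S ss S' c m _ IH K Hg HK. simpl in Hg. specialize (IH K Hg HK). nia.
  - intros S e b s1 s2 S' c m _ _ IH K Hg HK. simpl in Hg.
    assert (m <= sz_store S + K * c)%nat by (apply IH; destruct b; lia).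
    nia.
  - intros S x e s z S' c m He _ IH K Hg HK. simpl in Hg.
    pose proof (eval_size_to_nat_le _ _ _ He). specialize (IH K ltac:(lia) HK).
    cbn [ic_expr]. nia.
  - lia.
  - intros S s ss S1 S2 c1 c2 m1 m2 E1 IH1 _ IH2 K Hg HK. simpl in Hg.
    pose proof (proj1 exec_sz_store_le _ _ _ _ _ E1).
    specialize (IH1 K ltac:(lia) HK). specialize (IH2 K ltac:(lia) HK). nia.
  - lia.
  - intros S x s j i S1 S2 c1 c2 m1 m2 Hji E1 IH1 _ IH2 K Hg HK.
    pose proof (proj1 exec_sz_store_le _ _ _ _ _ E1).
    pose proof (sz_store_upd S x (VInt (Z.of_nat j))). pose proof (sz_z_of_nat j).
    specialize (IH1 K Hg HK). specialize (IH2 K Hg HK). simpl sz_val in *. nia.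
Qed.

Lemma ic_bounded_deriv_bounded T : (forall n, (n <= T n)%nat) ->
  ic_bounded T -> deriv_bounded T.
Proof.
  intros hT H p Hp. destruct (H p Hp) as (c & n0 & Hic).
  set (K := Nat.max 1 (list_max (map stmt_growth (body p)))).
  exists (1 + K * c)%nat, n0. intros vs out ic m Hl Hn Hr.
  specialize (Hic vs out ic m Hl Hn Hr). inversion Hr as [S' c' m' out' Hb]; subst.
  pose proof (proj1 (proj2 exec_sz_le_growth) _ _ _ _ _ Hb K ltac:(lia) ltac:(lia)).
  pose proof (sz_store_init_store (params p) vs). pose proof (hT (sz_inputs vs)). nia.
Qed.

Lemma deriv_bounded_out_bounded T : (forall n, (n <= T n)%nat) ->
  deriv_bounded T -> out_bounded T.
Proof.
  intros hT H p Hp. destruct (H p Hp) as (c & n0 & Hm).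
  exists (c + expr_growth (ret p))%nat, (Nat.max n0 1). intros vs out ic m Hl Hn Hr.
  specialize (Hm vs out ic m Hl ltac:(lia) Hr). inversion Hr as [S' c' m' out' Hb He]; subst.
  pose proof (proj2 (proj1 (proj2 exec_sz_store_le) _ _ _ _ _ Hb)).
  pose proof (sz_val_eval _ _ _ He). pose proof (hT (sz_inputs vs)). simpl in *. nia.
Qed.

Fixpoint max_var_expr (e : expr) : var :=
  match e with
  | EVar x => x
  | ENum _ | ETrue | EFalse => 0%nat
  | EUn _ e | EParen e => max_var_expr e
  | EBin _ e1 e2 => Nat.max (max_var_expr e1) (max_var_expr e2)
  end.

Fixpoint max_var_stmt (s : stmt) : var :=
  match s with
  | SDecl _ x => x
  | SAssign x e => Nat.max x (max_var_expr e)
  | SBlock ss => list_max (map max_var_stmt ss)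
  | SIf e s1 s2 => Nat.max (max_var_expr e) (Nat.max (max_var_stmt s1) (max_var_stmt s2))
  | SFor x e s => Nat.max x (Nat.max (max_var_expr e) (max_var_stmt s))
  end.

(* A run of [s] performing [k] loop iterations costs at most [cost_bound s * (1 + k)]. *)
Fixpoint cost_bound (s : stmt) : nat :=
  match s with
  | SDecl _ _ => 1
  | SAssign _ e => 1 + ic_expr e
  | SBlock ss => 1 + list_sum (map cost_bound ss)
  | SIf e s1 s2 => ic_expr e + cost_bound s1 + cost_bound s2
  | SFor _ e s => ic_expr (EUn USize e) + cost_bound s
  end.

Lemma eval_ext S S2 e v : eval S e v ->
  (forall y, (y <= max_var_expr e)%nat -> lookup S2 y = lookup S y) -> eval S2 e v.
Proof.
  induction 1; simpl; intros Hag.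
  - constructor. rewrite Hag; auto.
  - constructor.
  - constructor.
  - constructor.
  - econstructor; eauto.
  - econstructor; [apply IHeval1 | apply IHeval2 | eauto]; intros; apply Hag; lia.
  - constructor; auto.
Qed.

Lemma ty_expr_ext G H l e t : ty_expr G l e t ->
  (forall y, (y <= max_var_expr e)%nat -> H y = G y) -> ty_expr H l e t.
Proof.
  induction 1; simpl; intros Hag; try (constructor; auto; fail).
  - constructor. rewrite Hag; auto.
  - apply te_arith; auto; [apply IHty_expr1 | apply IHty_expr2]; intros; apply Hag; lia.
  - apply te_cmp with t1 t2; auto; [apply IHty_expr1 | apply IHty_expr2]; intros; apply Hag; lia.
  - apply te_bool; auto; [apply IHty_expr1 | apply IHty_expr2]; intros; apply Hag; lia.
Qed.

Lemma mul_pow2_add a k1 k2 :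
  a * 2 ^ Z.of_nat k1 * 2 ^ Z.of_nat k2 = a * 2 ^ Z.of_nat (k1 + k2).
Proof. rewrite Nat2Z.inj_add, Z.pow_add_r by lia. ring. Qed.

Section Instrument.

Variable cnt : var.

Definition double_cnt : stmt := SAssign cnt (EBin BAdd (EVar cnt) (EVar cnt)).

Fixpoint instrument (s : stmt) : stmt :=
  match s with
  | SBlock ss => SBlock (map instrument ss)
  | SIf e s1 s2 => SIf e (instrument s1) (instrument s2)
  | SFor x e s => SFor x e (SBlock [instrument s; double_cnt])
  | s => s
  end.

Definition agree_off_cnt (S2 S : store) := forall y, y <> cnt -> lookup S2 y = lookup S y.

Lemma agree_off_cnt_upd S2 S x v :
  agree_off_cnt S2 S -> agree_off_cnt (upd S2 x v) (upd S x v).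
Proof. intros H y Hy. rewrite !lookup_upd. destruct (y =? x)%nat; auto. Qed.

Lemma exec_double_cnt S a : lookup S cnt = Some (VInt a) ->
  exists m, exec S double_cnt (upd S cnt (VInt (a + a))) 4 m.
Proof.
  intros Ha. eexists. constructor; [rewrite Ha; discriminate|].
  econstructor; [constructor; exact Ha | constructor; exact Ha | reflexivity].
Qed.

Definition simulates_stmt (S : store) (s : stmt) (S' : store) (c : nat) : Prop :=
  forall S2 a, agree_off_cnt S2 S -> lookup S2 cnt = Some (VInt a) ->
  exists S2' c2 m2 k, exec S2 (instrument s) S2' c2 m2 /\ agree_off_cnt S2' S' /\
    lookup S2' cnt = Some (VInt (a * 2 ^ Z.of_nat k)) /\
    (c <= cost_bound s * (1 + k))%nat.

Definition simulates_seq (S : store) (ss : list stmt) (S' : store) (c : nat) : Prop :=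
  forall S2 a, agree_off_cnt S2 S -> lookup S2 cnt = Some (VInt a) ->
  exists S2' c2 m2 k, exec_seq S2 (map instrument ss) S2' c2 m2 /\ agree_off_cnt S2' S' /\
    lookup S2' cnt = Some (VInt (a * 2 ^ Z.of_nat k)) /\
    (c <= list_sum (map cost_bound ss) * (1 + k))%nat.

Definition simulates_loop (S : store) (x : var) (s : stmt) (j i : nat) (S' : store) (c : nat)
    : Prop :=
  forall S2 a, agree_off_cnt S2 S -> lookup S2 cnt = Some (VInt a) ->
  exists S2' c2 m2 k, exec_loop S2 x (SBlock [instrument s; double_cnt]) j i S2' c2 m2 /\
    agree_off_cnt S2' S' /\ lookup S2' cnt = Some (VInt (a * 2 ^ Z.of_nat k)) /\
    (c <= cost_bound s * k)%nat.

Lemma simulates_seq_cons S s ss S1 S2 c1 c2 :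
  simulates_stmt S s S1 c1 -> simulates_seq S1 ss S2 c2 -> simulates_seq S (s :: ss) S2 (c1 + c2).
Proof.
  intros Hs Hss S3 a Hr Ha.
  destruct (Hs S3 a Hr Ha) as (S3' & c3 & m3 & k1 & E1 & R1 & L1 & C1).
  destruct (Hss S3' _ R1 L1) as (S4' & c4 & m4 & k2 & E2 & R2 & L2 & C2).
  exists S4', (c3 + c4)%nat, (Nat.max m3 m4), (k1 + k2)%nat.
  split; [econstructor; eauto|]. split; [exact R2|]. split.
  - rewrite L2, mul_pow2_add. reflexivity.
  - simpl. nia.
Qed.

Lemma simulates_loop_step S x s j i S1 S2 c1 c2 : x <> cnt -> (j < i)%nat ->
  simulates_stmt (upd S x (VInt (Z.of_nat j))) s S1 c1 ->
  simulates_loop S1 x s (Datatypes.S j) i S2 c2 -> simulates_loop S x s j i S2 (c1 + c2).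
Proof.
  intros Hx Hji Hs Hl S3 a Hr Ha.
  destruct (Hs (upd S3 x (VInt (Z.of_nat j))) a) as (S3' & c3 & m3 & k1 & E1 & R1 & L1 & C1).
  { apply agree_off_cnt_upd; exact Hr. }
  { rewrite lookup_upd. destruct (Nat.eqb_spec cnt x); [congruence | exact Ha]. }
  set (a1 := a * 2 ^ Z.of_nat k1) in L1.
  destruct (exec_double_cnt S3' a1 L1) as [md Ed].
  destruct (Hl (upd S3' cnt (VInt (a1 + a1))) (a1 + a1)) as (S4 & c4 & m4 & k2 & E2 & R2 & L2 & C2).
  { intros y Hy. rewrite lookup_upd. destruct (Nat.eqb_spec y cnt); [congruence | auto]. }
  { rewrite lookup_upd, Nat.eqb_refl. reflexivity. }
  do 3 eexists; exists (1 + k1 + k2)%nat. split; [|split; [exact R2|split]].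
  - econstructor; [exact Hji | | exact E2].
    constructor. econstructor; [exact E1 | econstructor; [exact Ed | constructor]].
  - rewrite L2, <- !mul_pow2_add. unfold a1. change (2 ^ Z.of_nat 1) with 2. do 2 f_equal. ring.
  - nia.
Qed.

Scheme ty_stmt_min_ind := Minimality for ty_stmt Sort Prop
with ty_seq_min_ind := Minimality for ty_seq Sort Prop.
Combined Scheme ty_mutind from ty_stmt_min_ind, ty_seq_min_ind.

Lemma instrument_simulates :
  (forall S s S' c m, exec S s S' c m -> (max_var_stmt s < cnt)%nat -> simulates_stmt S s S' c) /\
  (forall S ss S' c m, exec_seq S ss S' c m -> (list_max (map max_var_stmt ss) < cnt)%nat ->
     simulates_seq S ss S' c) /\
  (forall S x s j i S' c m, exec_loop S x s j i S' c m -> (max_var_stmt s < cnt)%nat ->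
     (x < cnt)%nat -> simulates_loop S x s j i S' c).
Proof.
  apply exec_mutind.
  - intros S t x Hm S2 a Hr Ha. simpl in Hm. do 3 eexists; exists 0%nat.
    split; [constructor|]. split; [apply agree_off_cnt_upd; exact Hr|]. split; [|simpl; lia].
    rewrite lookup_upd. destruct (Nat.eqb_spec cnt x); [lia|]. rewrite Ha, Z.mul_1_r. reflexivity.
  - intros S x e v Hl He Hm S2 a Hr Ha. simpl in Hm. do 3 eexists; exists 0%nat.
    split; [constructor; [rewrite Hr by lia; exact Hl|]|].
    { apply (eval_ext S); [exact He|]. intros; apply Hr; lia. }
    split; [apply agree_off_cnt_upd; exact Hr|]. split; [|simpl; lia].
    rewrite lookup_upd. destruct (Nat.eqb_spec cnt x); [lia|]. rewrite Ha, Z.mul_1_r. reflexivity.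
  - intros S ss S' c m _ IH Hm S2 a Hr Ha.
    destruct (IH Hm S2 a Hr Ha) as (S2' & c2 & m2 & k & E & R & L & C).
    exists S2', (1 + c2)%nat, m2, k. split; [constructor; exact E|]. simpl. split; [|split]; auto. nia.
  - intros S e b s1 s2 S' c m He _ IH Hm S2 a Hr Ha. simpl in Hm.
    assert (Hb : (max_var_stmt (if b then s1 else s2) < cnt)%nat) by (destruct b; lia).
    destruct (IH Hb S2 a Hr Ha) as (S2' & c2 & m2 & k & E & R & L & C).
    do 3 eexists; exists k. split; [|split; [|split]]; eauto.
    + apply ex_if with (b := b); [|destruct b; exact E].
      apply (eval_ext S); [exact He|]. intros; apply Hr; lia.
    + simpl. destruct b; nia.
  - intros S x e s z S' c m He _ IH Hm S2 a Hr Ha. simpl in Hm.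
    destruct (IH ltac:(lia) ltac:(lia) S2 a Hr Ha) as (S2' & c2 & m2 & k & E & R & L & C).
    do 3 eexists; exists k. split; [|split; [|split]]; eauto.
    + simpl. eapply ex_for; [|exact E].
      apply (eval_ext S); [exact He|]. simpl. intros; apply Hr; lia.
    + simpl in *. nia.
  - intros S _ S2 a Hr Ha. exists S2, 0%nat, (sz_store S2), 0%nat.
    split; [constructor|]. rewrite Z.mul_1_r. simpl. auto with arith.
  - intros S s ss S1 S2 c1 c2 m1 m2 _ IH1 _ IH2 Hm. simpl in Hm.
    apply simulates_seq_cons with S1; [apply IH1 | apply IH2]; lia.
  - intros S x s j i Hij _ _ S2 a Hr Ha. exists S2, 0%nat, (sz_store S2), 0%nat.
    split; [constructor; exact Hij|]. rewrite Z.mul_1_r. simpl. auto with arith.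
  - intros S x s j i S1 S2 c1 c2 m1 m2 Hji _ IH1 _ IH2 Hm Hx.
    apply simulates_loop_step with S1; auto; lia.
Qed.

Lemma ty_double_cnt G l : G cnt = Some TInt -> ty_stmt G l double_cnt G.
Proof.
  intros Hc. apply ts_assign with (tx := TInt) (t := TInt); auto.
  - intros [_ ?]; discriminate.
  - apply (te_arith G l BAdd (EVar cnt) (EVar cnt) TInt TInt); auto; try constructor; auto;
      right; reflexivity.
  - left; split; right; reflexivity.
Qed.

Definition tenv_agree_off_cnt (H G : tenv) := forall y, y <> cnt -> H y = G y.

Lemma instrument_typed :
  (forall G l s G', ty_stmt G l s G' -> forall H, tenv_agree_off_cnt H G ->
     H cnt = Some TInt -> (max_var_stmt s < cnt)%nat ->
     exists H', ty_stmt H l (instrument s) H' /\ tenv_agree_off_cnt H' G' /\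
       H' cnt = Some TInt) /\
  (forall G l ss G', ty_seq G l ss G' -> forall H, tenv_agree_off_cnt H G ->
     H cnt = Some TInt -> (list_max (map max_var_stmt ss) < cnt)%nat ->
     exists H', ty_seq H l (map instrument ss) H' /\ tenv_agree_off_cnt H' G' /\
       H' cnt = Some TInt).
Proof.
  apply ty_mutind.
  - intros G l t x Hx Hn H Ha Hc Hm. simpl in Hm. exists (tupd H x t).
    split; [constructor; [rewrite Ha by lia|]; auto|]. unfold tupd. split.
    + intros y Hy. destruct (y =? x)%nat; auto.
    + destruct (Nat.eqb_spec cnt x); [lia | exact Hc].
  - intros G l x e tx t Hx Hn Ht Hcp H Ha Hc Hm. simpl in Hm. exists H.
    split; [|split; auto]. econstructor; eauto; [rewrite Ha by lia; eauto|].
    apply (ty_expr_ext G); auto. intros; apply Ha; lia.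
  - intros G l ss G' _ IH H Ha Hc Hm.
    destruct (IH H Ha Hc Hm) as (H' & Ts & _). exists H. split; [econstructor; eauto | auto].
  - intros G l e s1 s2 G1 G2 Te _ IH1 _ IH2 H Ha Hc Hm. simpl in Hm.
    destruct (IH1 H Ha Hc) as (H1 & T1 & _); [lia|].
    destruct (IH2 H Ha Hc) as (H2 & T2 & _); [lia|].
    exists H. split; [|auto]. econstructor; eauto.
    apply (ty_expr_ext G); auto. intros; apply Ha; lia.
  - intros G l x e s G' Te Hx _ IH H Ha Hc Hm. simpl in Hm.
    destruct (IH (tupd H x TIint)) as (H1 & T1 & _ & C1).
    { intros y Hy. unfold tupd. destruct (y =? x)%nat; auto. }
    { unfold tupd. destruct (Nat.eqb_spec cnt x); [lia | exact Hc]. }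
    { lia. }
    exists H. split; [|auto]. econstructor.
    + apply (ty_expr_ext G); auto. simpl. intros; apply Ha; lia.
    + rewrite Ha by lia. exact Hx.
    + econstructor. econstructor; [exact T1|]. econstructor; [apply ty_double_cnt, C1|].
      constructor.
  - intros G l H Ha Hc Hm. exists H. split; [constructor | auto].
  - intros G l s ss G1 G2 _ IH1 _ IH2 H Ha Hc Hm. simpl in Hm.
    destruct (IH1 H Ha Hc) as (H1 & T1 & A1 & C1); [lia|].
    destruct (IH2 H1 A1 C1) as (H2 & T2 & A2 & C2); [lia|].
    exists H2. split; [econstructor; eauto | auto].
Qed.

End Instrument.

Definition fresh_var (p : program) : var :=
  Datatypes.S (Nat.max (list_max (map max_var_stmt (body p))) (list_max (params p))).

(* On any input, outputs [2 ^ k] where [k] is the number of loop iterations of [p]. *)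
Definition loop_counter_program (p : program) : program :=
  let c := fresh_var p in
  Program (params p) (SDecl TInt c :: SAssign c (ENum 1) :: map (instrument c) (body p))
    (EVar c).

Lemma existsb_eqb_gt_list_max x xs : (list_max xs < x)%nat -> existsb (Nat.eqb x) xs = false.
Proof.
  induction xs as [|y xs IH]; simpl; auto. intros H.
  destruct (Nat.eqb_spec x y); [lia | apply IH; lia].
Qed.

Lemma init_tenv_fresh_var p : init_tenv (params p) (fresh_var p) = None.
Proof.
  unfold init_tenv. rewrite existsb_eqb_gt_list_max; [reflexivity|]. unfold fresh_var. lia.
Qed.

Lemma loop_counter_program_well_typed p : well_typed p -> well_typed (loop_counter_program p).
Proof.
  intros (G' & t & Ts & _). unfold well_typed, loop_counter_program. cbn [params body ret].
  set (c := fresh_var p).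
  destruct (proj2 (instrument_typed c) _ _ _ _ Ts (tupd (init_tenv (params p)) c TInt))
    as (H' & T' & _ & C').
  - intros y Hy. unfold tupd. destruct (Nat.eqb_spec y c); [lia | auto].
  - unfold tupd. rewrite Nat.eqb_refl. reflexivity.
  - unfold c, fresh_var. lia.
  - exists H', TInt. split; [|split; [constructor; exact C' | right; reflexivity]].
    econstructor; [constructor; [apply init_tenv_fresh_var | intros [? _]; discriminate]|].
    econstructor; [|exact T'].
    apply ts_assign with (tx := TInt) (t := TIint).
    + unfold tupd. rewrite Nat.eqb_refl. reflexivity.
    + intros [? _]; discriminate.
    + constructor.
    + left; split; [left | right]; reflexivity.
Qed.

Lemma loop_counter_program_run p vs out ic m : run p vs out ic m ->
  exists k ic' m', run (loop_counter_program p) vs (2 ^ Z.of_nat k) ic' m' /\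
    (ic <= list_sum (map cost_bound (body p)) * (1 + k) + ic_expr (ret p))%nat.
Proof.
  intros Hr. inversion Hr as [S' c' m' out' Hb _]; subst. set (c := fresh_var p).
  set (S1 := upd (upd (init_store (params p) vs) c (default_val TInt)) c (VInt (Z.of_nat 1))).
  destruct (proj1 (proj2 (instrument_simulates c)) _ _ _ _ _ Hb ltac:(unfold c, fresh_var; lia)
              S1 1) as (S2 & c2 & m2 & k & E & _ & L & C).
  - intros y Hy. unfold S1. rewrite !lookup_upd. destruct (Nat.eqb_spec y c); [lia | auto].
  - unfold S1. rewrite lookup_upd, Nat.eqb_refl. reflexivity.
  - exists k. do 2 eexists. split; [|lia].
    rewrite <- (Z.mul_1_l (2 ^ Z.of_nat k)). econstructor; [|constructor; exact L].
    econstructor; [constructor|]. econstructor; [|exact E].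
    constructor; [rewrite lookup_upd, Nat.eqb_refl; discriminate | constructor].
Qed.

Lemma out_bounded_ic_bounded T : (forall n, (n <= T n)%nat) ->
  out_bounded T -> ic_bounded T.
Proof.
  intros hT H p Hp. destruct (H _ (loop_counter_program_well_typed p Hp)) as (c & n0 & Hout).
  set (B := list_sum (map cost_bound (body p))).
  exists (B * (1 + c) + ic_expr (ret p))%nat, (Nat.max n0 1). intros vs out ic m Hl Hn Hr.
  destruct (loop_counter_program_run p vs out ic m Hr) as (k & ic' & m' & Hr' & Hic).
  specialize (Hout vs _ _ _ Hl ltac:(lia) Hr'). pose proof (sz_z_pow2 k).
  pose proof (hT (sz_inputs vs)). set (Tn := T (sz_inputs vs)) in *.
  assert (B * k <= B * (c * Tn))%nat by (apply Nat.mul_le_mono_l; lia).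
  nia.
Qed.

Theorem lemma3 (T : nat -> nat) (hT : forall n, (n <= T n)%nat) :
  (ic_bounded T <-> out_bounded T) /\ (out_bounded T <-> deriv_bounded T).
Proof.
  pose proof (ic_bounded_deriv_bounded T hT).
  pose proof (deriv_bounded_out_bounded T hT).
  pose proof (out_bounded_ic_bounded T hT).
  tauto.
Qed.
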